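(* Let $\mathbf{A}\in\mathbb{R}^{m\times n}$ have rows $\mathbf{a}_1^\mathsf{T},\dots,\mathbf{a}_m^\mathsf{T}$ and let $\lambda>\max_{l}\|\mathbf{a}_l\|_\infty$. Consider $$\text{(P)}\quad \min_{\boldsymbol{x}\in\{-1,1\}^n}\ \max_{l\in\{1,\dots,m\}}\mathbf{a}_l^\mathsf{T}\boldsymbol{x},\qquad \text{(P}_\lambda\text{)}\quad \min_{\boldsymbol{x}\in[-1,1]^n}\ \max_{l\in\{1,\dots,m\}}\mathbf{a}_l^\mathsf{T}\boldsymbol{x}-\lambda\|\boldsymbol{x}\|_1.$$ Then every optimal solution of (P) is an optimal solution of (P$_\lambda$), and every optimal solution of (P$_\lambda$) is an optimal solution of (P). *)

From HB Require Import structures.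
From mathcomp Require Import all_boot all_order all_algebra.
Set Implicit Arguments. Unset Strict Implicit. Unset Printing Implicit Defensive.
Import Order.TTheory GRing.Theory Num.Theory.
Local Open Scope ring_scope.

Section Defs.
Variables (R : realFieldType) (m n : nat).

Definition rowdot (A : 'M[R]_(m.+1, n)) (l : 'I_m.+1) (x : 'cV[R]_n) : R :=
  (A *m x) l 0.

(* max_{l} a_l^T x  (m.+1 >= 1 rows, so the max is well defined) *)
Definition maxobj (A : 'M[R]_(m.+1, n)) (x : 'cV[R]_n) : R :=
  \big[Num.max/rowdot A ord0 x]_(l < m.+1) rowdot A l x.

Definition norm1 (x : 'cV[R]_n) : R := \sum_(j < n) `|x j 0|.

Definition row_norminf (A : 'M[R]_(m.+1, n)) (l : 'I_m.+1) : R :=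
  \big[Num.max/0]_(j < n) `|A l j|.

Definition binvec (x : 'cV[R]_n) : Prop := forall j, x j 0 = 1 \/ x j 0 = -1.
Definition boxvec (x : 'cV[R]_n) : Prop := forall j, -1 <= x j 0 <= 1.

Definition optP (A : 'M[R]_(m.+1, n)) (x : 'cV[R]_n) : Prop :=
  binvec x /\ forall y, binvec y -> maxobj A x <= maxobj A y.

Definition optPlam (A : 'M[R]_(m.+1, n)) (lam : R) (x : 'cV[R]_n) : Prop :=
  boxvec x /\ forall y, boxvec y ->
    maxobj A x - lam * norm1 x <= maxobj A y - lam * norm1 y.
End Defs.

From mathcomp Require Import all_boot all_order all_algebra.
From mathcomp Require Import ring.
Import Order.TTheory GRing.Theory Num.Theory.
Local Open Scope ring_scope.
Set Implicit Arguments. Unset Strict Implicit.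

(* Rounding a point x of the box [-1,1]^n to the sign vector of its entries
   raises every a_l^T x by at most ||a_l||_inf * g(x), where
   g(x) = sum_j (1 - |x_j|) is the distance of x to the vertices, while it
   raises ||x||_1 by exactly g(x).  Hence, for lambda above every
   ||a_l||_inf, rounding lowers the penalized objective by at least a positive
   multiple of g(x): minimizers of (P_lambda) are vertices, and on vertices
   the two objectives differ by the constant lambda * n. *)

Section SignRounding.
Variables (R : realFieldType) (n : nat).
Implicit Types x : 'cV[R]_n.

Definition sign_round x : 'cV[R]_n := \col_j (if 0 <= x j 0 then 1 else -1).

Definition vertex_gap x : R := \sum_(j < n) (1 - `|x j 0|).

Lemma binvec_sign_round x : binvec (sign_round x).
Proof. by move=> j; rewrite mxE; case: ifP => _; [left | right]. Qed.

Lemma binvec_boxvec x : binvec x -> boxvec x.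
Proof.
have le_N11 : (-1 : R) <= 1 by rewrite -subr_ge0 opprK addr_ge0.
by move=> xb j; case: (xb j) => ->; rewrite lexx le_N11.
Qed.

Lemma norm1_binvec x : binvec x -> norm1 x = n%:R.
Proof.
move=> xb; rewrite /norm1 (eq_bigr (fun _ => 1)) ?sumr_const ?card_ord //.
by move=> j _; case: (xb j) => ->; rewrite ?normrN normr1.
Qed.

Lemma norm1_sign_round x : norm1 (sign_round x) = norm1 x + vertex_gap x.
Proof.
rewrite (norm1_binvec (binvec_sign_round x)) /vertex_gap sumrB.
by rewrite sumr_const card_ord addrCA subrr addr0.
Qed.

Lemma boxvec_gap_term_ge0 x j : boxvec x -> 0 <= 1 - `|x j 0|.
Proof. by move=> xbox; rewrite subr_ge0 ler_norml. Qed.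

Lemma vertex_gap_ge0 x : boxvec x -> 0 <= vertex_gap x.
Proof. by move=> xbox; apply: sumr_ge0 => j _; apply: boxvec_gap_term_ge0. Qed.

Lemma vertex_gap_eq0 x : boxvec x -> vertex_gap x = 0 -> binvec x.
Proof.
move=> xbox /eqP; rewrite psumr_eq0 => [/allP gap0 j|j _]; last first.
  exact: boxvec_gap_term_ge0.
move: (gap0 j (mem_index_enum _)); rewrite /= subr_eq0 => /eqP norm_x.
have [x_le0 | x_gt0] := ler0P (x j 0).
  by right; rewrite -[x j 0]opprK -(ler0_norm x_le0) -norm_x.
by left; rewrite -(gtr0_norm x_gt0) -norm_x.
Qed.

Lemma sign_round_dist x j : boxvec x ->
  `|sign_round x j 0 - x j 0| = 1 - `|x j 0|.
Proof.
move=> xbox; have /andP[x_geN1 x_le1] := xbox j; rewrite mxE.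
case: ifP => [x_ge0 | /negbT]; first by rewrite !ger0_norm // subr_ge0.
rewrite -ltNge => x_lt0.
rewrite (ltr0_norm x_lt0) ler0_norm ?subr_le0 //.
by rewrite opprB !opprK addrC.
Qed.

End SignRounding.

Section PenalizedObjective.
Variables (R : realFieldType) (m n : nat) (A : 'M[R]_(m.+1, n)).
Implicit Types x : 'cV[R]_n.

Definition penalized_obj (lam : R) x : R := maxobj A x - lam * norm1 x.

Lemma rowdot_le_maxobj l x : rowdot A l x <= maxobj A x.
Proof. exact: (le_bigmax _ (fun l => rowdot A l x)). Qed.

Lemma abs_entry_le_row_norminf l j : `|A l j| <= row_norminf A l.
Proof. exact: (le_bigmax 0 (fun j => `|A l j|)). Qed.

Lemma rowdot_sign_round l x : boxvec x ->
  rowdot A l (sign_round x) <= rowdot A l x + row_norminf A l * vertex_gap x.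
Proof.
move=> xbox; rewrite -lerBlDl /rowdot !mxE -sumrB /vertex_gap mulr_sumr.
apply: ler_sum => j _; rewrite -mulrBr.
apply: le_trans (ler_norm _) _; rewrite normrM.
have := sign_round_dist j xbox; rewrite mxE => ->.
by rewrite ler_wpM2r ?boxvec_gap_term_ge0 ?abs_entry_le_row_norminf.
Qed.

Lemma maxobj_sign_round c x : (forall l, row_norminf A l <= c) -> boxvec x ->
  maxobj A (sign_round x) <= maxobj A x + c * vertex_gap x.
Proof.
move=> normA_le xbox.
have row_le l : rowdot A l (sign_round x) <= maxobj A x + c * vertex_gap x.
  apply: le_trans (rowdot_sign_round l xbox) _.
  by rewrite lerD ?rowdot_le_maxobj ?ler_wpM2r ?vertex_gap_ge0.
by apply: bigmax_le => [|l _]; apply: row_le.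
Qed.

Lemma penalized_obj_sign_round c lam x :
  (forall l, row_norminf A l <= c) -> boxvec x ->
  penalized_obj lam (sign_round x) + (lam - c) * vertex_gap x
    <= penalized_obj lam x.
Proof.
move=> normA_le xbox; rewrite /penalized_obj norm1_sign_round.
set g := vertex_gap x.
have -> : maxobj A (sign_round x) - lam * (norm1 x + g) + (lam - c) * g
        = maxobj A (sign_round x) - c * g - lam * norm1 x by ring.
by rewrite lerD2r lerBlDr maxobj_sign_round.
Qed.

End PenalizedObjective.

Theorem theorem3 (R : realFieldType) (m n : nat) (A : 'M[R]_(m.+1, n)) (lam : R)
  (hlam : forall l : 'I_m.+1, row_norminf A l < lam) :
  (forall x : 'cV[R]_n, optP A x -> optPlam A lam x) /\
  (forall x : 'cV[R]_n, optPlam A lam x -> optP A x).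
Proof.
pose c := \big[Num.max/row_norminf A ord0]_(l < m.+1) row_norminf A l.
have normA_le l : row_norminf A l <= c by apply: (le_bigmax _ (row_norminf A)).
have lam_gt_c : 0 < lam - c by rewrite subr_gt0; apply: bigmax_lt.
split=> [x [xb x_opt] | x [xbox x_opt]].
  split=> [|y ybox]; first exact: binvec_boxvec.
  apply: le_trans (penalized_obj_sign_round lam normA_le ybox).
  apply: ler_wpDr; first by rewrite mulr_ge0 ?vertex_gap_ge0 // ltW.
  rewrite /penalized_obj (norm1_binvec xb) (norm1_binvec (binvec_sign_round y)).
  by rewrite lerD2r; apply/x_opt/binvec_sign_round.
have xb : binvec x.
  apply: vertex_gap_eq0 => //; apply/eqP; rewrite eq_le vertex_gap_ge0 // andbT.
  rewrite -(pmulr_rle0 _ lam_gt_c) -(lerD2l (penalized_obj A lam (sign_round x))).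
  rewrite addr0; apply: le_trans (penalized_obj_sign_round lam normA_le xbox) _.
  exact/x_opt/binvec_boxvec/binvec_sign_round.
split=> // y yb; have := x_opt y (binvec_boxvec yb).
by rewrite !norm1_binvec // lerD2r.
Qed.
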